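(* For any $\delta>0$ there exists a fair allocation instance with additive valuations and positive entitlements summing to $1$ in which some agent $a_i$ satisfies $\frac{\mathsf{APS}_i}{\mathsf{WMMS}_i}<\delta$.
   Context: A fair allocation instance consists of agents $a_1,\dots,a_n$, a finite set $M$ of $m$ indivisible goods, valuations $v_i:2^M\to\mathbb{R}_{\ge0}$, and entitlements $b_1,\dots,b_n>0$. A valuation is additive if $v(S)=\sum_{g\in S}v(\{g\})$. Let $\Pi_n$ be the set of partitions $(S_1,\dots,S_n)$ of $M$ into $n$ bundles. The weighted maximin share is $\mathsf{WMMS}_i=\max_{S\in\Pi_n}\min_{j\in[n]}v_i(S_j)\frac{b_i}{b_j}$. With $\mathcal{P}=\{p\in\mathbb{R}^m_{\ge0}:\sum_g p_g=1\}$ and $p(S)=\sum_{g\in S}p_g$, the AnyPrice share is $\mathsf{APS}_i=\min_{p\in\mathcal{P}}\max_{S\subseteq M,\ p(S)\le b_i}v_i(S)$. *)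

From HB Require Import structures.
From mathcomp Require Import all_boot all_order all_algebra.
From mathcomp Require Import all_classical all_reals.
Set Implicit Arguments. Unset Strict Implicit. Unset Printing Implicit Defensive.
Import Order.TTheory GRing.Theory Num.Theory.
Local Open Scope ring_scope.

Section FairDivision.
Variable R : realType.

Definition addval (m : nat) (v : 'I_m -> R) (S : {set 'I_m}) : R :=
  \sum_(g in S) v g.

Definition is_price (m : nat) (p : 'I_m -> R) : Prop :=
  (forall g, 0 <= p g) /\ \sum_(g < m) p g = 1.

(* Instance with n.+1 agents, m goods.  val i g = v_i({g}), b = entitlements. *)
(* Partitions of M into n.+1 bundles are given by assignments A : goods -> agents,
   bundle j = [set g | A g == j]. *)
Definition bundle (n m : nat) (A : {ffun 'I_m -> 'I_n.+1}) (j : 'I_n.+1) : {set 'I_m} :=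
  [set g | A g == j].

Definition WMMS (n m : nat) (val : 'I_n.+1 -> 'I_m -> R) (b : 'I_n.+1 -> R)
  (i : 'I_n.+1) : R :=
  \big[Num.max/0]_(A : {ffun 'I_m -> 'I_n.+1})
    (let F := fun j => addval (val i) (bundle A j) * (b i / b j) in
     \big[Num.min/F ord0]_(j < n.+1) F j).

Definition APS (n m : nat) (val : 'I_n.+1 -> 'I_m -> R) (b : 'I_n.+1 -> R)
  (i : 'I_n.+1) : R :=
  inf [set x : R | exists p : 'I_m -> R, is_price p /\
        x = \big[Num.max/0]_(S : {set 'I_m} | \sum_(g in S) p g <= b i)
              addval (val i) S].

End FairDivision.

From HB Require Import structures.
From mathcomp Require Import all_boot all_order all_algebra.
From mathcomp Require Import all_classical all_reals.
From mathcomp Require Import lra.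
Import Order.TTheory GRing.Theory Num.Theory.
Set Implicit Arguments. Unset Strict Implicit.
Local Open Scope ring_scope.

(* Take two identical goods of value 1 and entitlements 1/3 and 2/3.  Handing
   one good to each agent shows that the poorer agent has WMMS at least 1/2.
   But if each good is priced 1/2, that agent's budget 1/3 buys nothing, so
   her AnyPrice share is 0. *)

Section Shares.
Variables (R : realType) (n m : nat).
Implicit Types (val : 'I_n.+1 -> 'I_m -> R) (b : 'I_n.+1 -> R) (p v : 'I_m -> R).

Lemma WMMS_ge_assignment val b i (A : {ffun 'I_m -> 'I_n.+1}) x :
  (forall j, x <= addval (val i) (bundle A j) * (b i / b j)) ->
  x <= WMMS val b i.
Proof.
move=> x_le; apply: le_trans (le_bigmax _ _ A) => /=.
by apply: le_bigmin => [|j _]; apply: x_le.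
Qed.

Lemma affordable_max_ge0 v p budget :
  0 <= \big[Num.max/0]_(S : {set 'I_m} | \sum_(g in S) p g <= budget) addval v S.
Proof. by apply/bigmax_geP; left. Qed.

Lemma APS_le_price val b i p : is_price p ->
  APS val b i <=
    \big[Num.max/0]_(S : {set 'I_m} | \sum_(g in S) p g <= b i) addval (val i) S.
Proof.
move=> p_price; apply: ge_inf; last by exists p.
by exists 0 => _ [q [_ ->]]; apply: affordable_max_ge0.
Qed.

Lemma affordable_bundle_empty p budget (S : {set 'I_m}) g :
  (forall g, 0 <= p g) -> (forall g, budget < p g) ->
  \sum_(h in S) p h <= budget -> g \notin S.
Proof.
move=> p_ge0 p_gt S_afford; apply/negP => gS.
have p_le_sum : p g <= \sum_(h in S) p h.
  by rewrite (bigD1 g) //= lerDl sumr_ge0.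
by move: (le_trans p_le_sum S_afford); rewrite leNgt p_gt.
Qed.

Lemma affordable_max_eq0 v p budget :
  (forall g, 0 <= p g) -> (forall g, budget < p g) ->
  \big[Num.max/0]_(S : {set 'I_m} | \sum_(g in S) p g <= budget) addval v S = 0.
Proof.
move=> p_ge0 p_gt; apply: big1_idem => [|S S_afford]; first exact: maxxx.
by apply: big_pred0 => g; apply/negbTE; apply: affordable_bundle_empty S_afford.
Qed.

Lemma APS_le0_of_expensive_goods val b i p :
  is_price p -> (forall g, b i < p g) -> APS val b i <= 0.
Proof.
move=> p_price p_gt.
by rewrite -(affordable_max_eq0 (val i) p_price.1 p_gt) APS_le_price.
Qed.

Lemma APS_le0_of_small_entitlement val b i :
  (0 < m)%N -> b i < m%:R^-1 -> APS val b i <= 0.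
Proof.
move=> m_gt0 bi_small.
have uniform_price : is_price (fun _ : 'I_m => m%:R^-1 : R).
  split=> [g|]; first by rewrite invr_ge0 ler0n.
  by rewrite sumr_const card_ord -[_ *+ m]mulr_natr mulVf // pnatr_eq0 -lt0n.
exact: APS_le0_of_expensive_goods uniform_price (fun=> bi_small).
Qed.

End Shares.

Lemma WMMS_unit_goods_ge (R : realType) (n : nat) (b : 'I_n.+1 -> R) i B :
  (forall j, 0 < b j) -> (forall j, b j <= B) ->
  b i / B <= WMMS (fun (_ : 'I_n.+1) (_ : 'I_n.+1) => 1 : R) b i.
Proof.
move=> b_gt0 b_le; apply: (WMMS_ge_assignment (A := [ffun g => g])) => j.
have -> : bundle [ffun g => g] j = [set j].
  by apply/setP => g; rewrite !inE ffunE.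
rewrite /addval big_set1 mul1r ler_pM2l // lef_pV2 ?posrE //.
exact: lt_le_trans (b_gt0 j) (b_le j).
Qed.

Theorem proposition1 (R : realType) (delta : R) (hdelta : 0 < delta) :
  exists (n m : nat) (val : 'I_n.+1 -> 'I_m -> R) (b : 'I_n.+1 -> R),
    (forall i g, 0 <= val i g) /\
    (forall i, 0 < b i) /\ \sum_(i < n.+1) b i = 1 /\
    exists i : 'I_n.+1,
      0 < WMMS val b i /\ APS val b i / WMMS val b i < delta.
Proof.
pose val : 'I_2 -> 'I_2 -> R := fun _ _ => 1.
pose b : 'I_2 -> R := fun i => if i == ord0 then 1/3 else 2/3.
have b_gt0 j : 0 < b j by rewrite /b; case: ifP => _; lra.
have b_le j : b j <= 2/3 by rewrite /b; case: ifP => _; lra.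
exists 1%N, 2%N, val, b; split; first by move=> *; apply: ler01.
split; first exact: b_gt0.
split; first by rewrite big_ord_recr big_ord1 /b /=; lra.
exists ord0.
have WMMS_ge : 1/2 <= WMMS val b ord0.
  by apply: le_trans (WMMS_unit_goods_ge ord0 b_gt0 b_le); rewrite /b /=; lra.
have APS_le0 : APS val b ord0 <= 0.
  by apply: APS_le0_of_small_entitlement => //; rewrite /b /=; lra.
have WMMS_gt0 : 0 < WMMS val b ord0 by apply: lt_le_trans WMMS_ge; lra.
split=> //; rewrite ltr_pdivrMr //.
by apply: le_lt_trans APS_le0 _; apply: mulr_gt0.
Qed.
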